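(* Let $|\Pi|=n>2$, let $\mathcal{G}$ be a rooted communication graph on $\Pi$ with $\operatorname{Root}(\mathcal{G})=R$, let $\mathcal{G}'$ be a rooted communication graph on $\Pi$ with $\operatorname{Root}(\mathcal{G}')=R'$, and let $R''\subseteq \Pi$ be nonempty with $R''\neq R$ and $R''\neq R'$. Then there is a sequence of communication graphs $\mathcal{G}=\mathcal{G}_1,\mathcal{G}_2,\dots,\mathcal{G}_k=\mathcal{G}'$ such that each $\mathcal{G}_i$ is rooted, $\operatorname{Root}(\mathcal{G}_i)\neq R''$, and for $1\le i<k$ the graphs $\mathcal{G}_i$ and $\mathcal{G}_{i+1}$ differ in exactly one edge.
   Context: A communication graph on $\Pi$ is a directed graph with vertex set $\Pi$ containing every self-loop. A root component of a graph $\mathcal{G}$ is a nonempty set $R\subseteq\Pi$ that is the vertex set of a strongly connected component of $\mathcal{G}$ such that no edge $(p\to q)$ with $q\in R$, $p\notin R$ exists. A graph is rooted if it has exactly one root component, denoted $\operatorname{Root}(\mathcal{G})$. *)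

From mathcomp Require Import all_boot.
Set Implicit Arguments. Unset Strict Implicit. Unset Printing Implicit Defensive.

(* A directed graph on the finite process set Pi is given by its edge set
   E : {set Pi * Pi}; (p, q) \in E means the edge p -> q. *)
Section Defs.
Variable Pi : finType.

Definition edge_rel (E : {set Pi * Pi}) : rel Pi := fun p q => (p, q) \in E.

Definition comm_graph (E : {set Pi * Pi}) : Prop := forall p : Pi, (p, p) \in E.

Definition is_scc (E : {set Pi * Pi}) (R : {set Pi}) : Prop :=
  R != set0 /\
  (forall x y, x \in R -> y \in R -> connect (edge_rel E) x y) /\
  (forall x y, x \in R -> connect (edge_rel E) x y -> connect (edge_rel E) y x -> y \in R).

Definition is_root_comp (E : {set Pi * Pi}) (R : {set Pi}) : Prop :=
  is_scc E R /\ (forall p q, (p, q) \in E -> q \in R -> p \in R).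

Definition rooted_with (E : {set Pi * Pi}) (R : {set Pi}) : Prop :=
  is_root_comp E R /\ (forall R', is_root_comp E R' -> R' = R).

Definition differ_one_edge (E1 E2 : {set Pi * Pi}) : Prop :=
  #|(E1 :\: E2) :|: (E2 :\: E1)| = 1.
End Defs.

(* A rooted graph's root component is exactly the set of vertices
   from which every vertex is reachable; it only grows when edges are added.
   It suffices to link G and G' to a common graph through rooted graphs whose
   root is not R'', one edge at a time.
   If R'' is not the whole vertex set, pick u outside R'' and r in the root of
   G: every supergraph of G containing u -> r has u in its root, so G (and
   likewise G') can be completed edge by edge to the complete graph.
   If R'' is everything, some vertex must stay outside the root.  A graph with
   no edge entering a set S has its root inside S, and is rooted as soon as it
   contains all edges out of some a in S.  Through such graphs, G moves to the
   graph of all edges not entering its root, then to those not entering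
   {a, c}, then to those not entering {c}; |Pi| > 2 leaves a vertex outside
   {a, c}. *)
From Stdlib Require Import Relation_Operators Operators_Properties.
From mathcomp Require Import all_boot.
Set Implicit Arguments. Unset Strict Implicit. Unset Printing Implicit Defensive.

Section RootSet.
Variable Pi : finType.
Implicit Types (E F H : {set Pi * Pi}) (S : {set Pi}).

Definition root_set E := [set v | [forall w, connect (edge_rel E) v w]].

Lemma connect_subset E F x y : E \subset F ->
  connect (edge_rel E) x y -> connect (edge_rel F) x y.
Proof.
move=> sEF; apply: connect_sub => u v huv; apply: connect1.
exact: (subsetP sEF).
Qed.

Lemma root_set_subset E F : E \subset F -> root_set E \subset root_set F.
Proof.
move=> sEF; apply/subsetP => v; rewrite !inE => /forallP h.
by apply/forallP => w; apply: connect_subset sEF (h w).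
Qed.

Lemma mem_root_set E v : v \in root_set E -> forall w, connect (edge_rel E) v w.
Proof. by rewrite inE => /forallP. Qed.

Lemma connect_in_closed E S x y :
  (forall p q, (p, q) \in E -> q \in S -> p \in S) ->
  connect (edge_rel E) x y -> y \in S -> x \in S.
Proof.
move=> cl /connectP[p ep ->]; elim: p x ep => //= z p IH x /andP[exz ep] hl.
exact: cl exz (IH _ ep hl).
Qed.

(* The component of an ancestor of [w] with fewest ancestors is a root. *)
Lemma exists_root_comp E w : exists C, is_root_comp E C /\
  exists2 c, c \in C & connect (edge_rel E) c w.
Proof.
set e := edge_rel E.
pose anc x := [set y | connect e y x].
have [a aw amin] :=
  @arg_minnP _ w (connect e ^~ w) (fun a => #|anc a|) (connect0 e w).
exists [set x | connect e x a && connect e a x]; split; last first.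
  by exists a => //; rewrite inE connect0.
split; last first.
  move=> p q pq; rewrite !inE => /andP[qa aq].
  have pa : connect e p a by apply: connect_trans qa; exact: connect1.
  have sub : anc p \subset anc a.
    by apply/subsetP => y; rewrite !inE => yp; exact: connect_trans yp pa.
  have /eqP anc_pa : anc p == anc a.
    by rewrite eqEcard sub; exact: amin (connect_trans pa aw).
  have : a \in anc a by rewrite inE connect0.
  by rewrite -anc_pa inE pa.
split; first by apply/set0Pn; exists a; rewrite inE connect0.
split.
  move=> x y; rewrite !inE => /andP[xa _] /andP[_ ay]; exact: connect_trans xa ay.
move=> x y; rewrite !inE => /andP[xa ax] xy yx.
by rewrite (connect_trans yx xa) (connect_trans ax xy).
Qed.

Lemma rooted_withE E R : rooted_with E R -> R = root_set E /\ R != set0.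
Proof.
move=> [[[R0 [Rc Rcl]] _] Runi]; split=> //.
have RS : R \subset root_set E.
  apply/subsetP => r rR; rewrite inE; apply/forallP => w.
  have [C [CR [c cC cw]]] := exists_root_comp E w.
  rewrite (Runi _ CR) in cC.
  exact: connect_trans (Rc _ _ rR cC) cw.
apply/eqP; rewrite eqEsubset RS; apply/subsetP => v vR.
have [r rR] := set0Pn _ R0.
exact: Rcl r v rR (mem_root_set (subsetP RS r rR) v) (mem_root_set vR r).
Qed.

Lemma rooted_with_root_set E : root_set E != set0 -> rooted_with E (root_set E).
Proof.
move=> R0.
have rc : is_root_comp E (root_set E).
  split; last first.
    move=> p q pq qR; rewrite inE; apply/forallP => w.
    exact: connect_trans (connect1 pq) (mem_root_set qR w).
  split=> //; split=> [x y xR _|x y xR _ yx]; first exact: mem_root_set.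
  rewrite inE; apply/forallP => w.
  exact: connect_trans yx (mem_root_set xR w).
split=> // C [[C0 [Cc Ccl]] Cin].
have [r rR] := set0Pn _ R0.
have [x xC] := set0Pn _ C0.
have rC : r \in C by apply: connect_in_closed Cin (mem_root_set rR x) xC.
apply/eqP; rewrite eqEsubset; apply/andP; split; apply/subsetP => y.
  move=> yC; rewrite inE; apply/forallP => w.
  exact: connect_trans (Cc _ _ yC rC) (mem_root_set rR w).
by move=> yR; exact: Ccl r y rC (mem_root_set rR y) (mem_root_set yR r).
Qed.

Definition entry_free S := [set e : Pi * Pi | (e.2 \in S) ==> (e.1 \in S)].

Lemma entry_free_loop S p : (p, p) \in entry_free S.
Proof. by rewrite inE implybb. Qed.

Lemma root_set_entry_free H S s : H \subset entry_free S -> s \in S ->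
  root_set H \subset S.
Proof.
move=> HS sS; apply/subsetP => v vR.
apply: connect_in_closed (mem_root_set vR s) sS => p q /(subsetP HS).
by rewrite inE => /implyP.
Qed.

Lemma subset_entry_free_root_set E : E \subset entry_free (root_set E).
Proof.
apply/subsetP => -[p q] pq; rewrite inE /=; apply/implyP => qR.
rewrite inE; apply/forallP => w.
exact: connect_trans (connect1 pq) (mem_root_set qR w).
Qed.

End RootSet.

Section EdgeLinked.
Variables (Pi : finType) (ok : {set Pi * Pi} -> Prop).
Implicit Types (E F H : {set Pi * Pi}).

Definition edge_step E F := [/\ ok E, ok F & differ_one_edge E F].
Definition edge_linked := clos_refl_sym_trans _ edge_step.

Lemma differ_one_edgeC E F : differ_one_edge E F -> differ_one_edge F E.
Proof. by rewrite /differ_one_edge setUC. Qed.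

Lemma differ_one_edge_setU1 E e : e \notin E -> differ_one_edge E (e |: E).
Proof.
move=> eE; rewrite /differ_one_edge.
suff -> : (E :\: (e |: E)) :|: ((e |: E) :\: E) = [set e] by exact: cards1.
apply/setP => x; rewrite !inE; case: (x =P e) => [->|_]; rewrite ?eE //=.
by case: (x \in E).
Qed.

Lemma edge_linked_setU1 E e : ok E -> ok (e |: E) -> edge_linked E (e |: E).
Proof.
move=> okE okeE; have [eE|eE] := boolP (e \in E).
  have /setUidPr -> : [set e] \subset E by rewrite sub1set.
  exact: rst_refl.
by apply: rst_step; split=> //; exact: differ_one_edge_setU1.
Qed.

Lemma edge_linked_interval E F : E \subset F ->
  (forall H, E \subset H -> H \subset F -> ok H) -> edge_linked E F.
Proof.
move eqn : #|F :\: E| => n; elim: n E eqn => [|n IH] E eqn sEF okEF.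
  have /eqP -> : E == F.
    by rewrite eqEsubset sEF -setD_eq0 -cards_eq0 eqn.
  exact: rst_refl.
have [e eFE] : exists e, e \in F :\: E by apply/card_gt0P; rewrite eqn.
move: (eFE); rewrite inE => /andP[eE eF].
have seF : e |: E \subset F by rewrite subUset sub1set eF.
apply: rst_trans (edge_linked_setU1 _ _) (IH _ _ seF _).
- exact: okEF.
- by apply: okEF; rewrite ?subsetUr.
- have -> : F :\: (e |: E) = (F :\: E) :\ e.
    by apply/setP => x; rewrite !inE negb_or andbA andbC.
  by move: eqn; rewrite (cardsD1 e) eFE add1n => -[].
- by move=> H sH HF; apply: okEF => //; apply: subset_trans sH; exact: subsetUr.
Qed.

Lemma edge_linked_seq E F : edge_linked E F -> ok E ->
  exists (k : nat) (Gs : nat -> {set Pi * Pi}),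
    [/\ 0 < k, Gs 0 = E, Gs k.-1 = F,
        (forall i, i < k -> ok (Gs i))
      & (forall i, i.+1 < k -> differ_one_edge (Gs i) (Gs i.+1))].
Proof.
move=> h; have {h} := clos_rst_rst1n _ _ _ _ h; elim=> [x|x y z hxy _ IH] okx.
  by exists 1, (fun _ => x); split=> // -[].
have [oky dxy] : ok y /\ differ_one_edge x y.
  by case: hxy => -[? ? ?]; split=> //; exact: differ_one_edgeC.
have [k [Gs [k0 G0 Gk Gok Gd]]] := IH oky.
exists k.+1, (fun i => if i is j.+1 then Gs j else x); split => //.
- by case: k k0 Gk {Gok Gd}.
- by case=> // i /Gok.
- by case=> [|i] /= hi; [rewrite G0|apply: Gd].
Qed.

End EdgeLinked.

Section AvoidingRoot.
Variable Pi : finType.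
Implicit Types (E F H : {set Pi * Pi}) (S : {set Pi}).

Definition rooted_avoiding (R'' : {set Pi}) E :=
  [/\ comm_graph E, root_set E != set0 & root_set E != R''].

Lemma edge_linked_setT R'' G : R'' != setT ->
  rooted_avoiding R'' G -> edge_linked (rooted_avoiding R'') G setT.
Proof.
move=> nT okG; have [cG /set0Pn[r rR] _] := okG.
have /properP[_ [u _ uR]] : R'' \proper setT by rewrite properT.
have okH H : (u, r) |: G \subset H -> rooted_avoiding R'' H.
  rewrite subUset sub1set => /andP[urH sGH].
  have rH := subsetP (root_set_subset sGH) r rR.
  have uH : u \in root_set H.
    rewrite inE; apply/forallP => w.
    exact: connect_trans (connect1 urH) (mem_root_set rH w).
  split; first by move=> p; apply: (subsetP sGH).
    by apply/set0Pn; exists r.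
  by apply: contraNneq uR => <-.
apply: rst_trans (edge_linked_setU1 _ _) (edge_linked_interval (subsetT _) _).
- exact: okG.
- exact: okH.
- by move=> H sH _; exact: okH.
Qed.

Lemma rooted_avoiding_setT_entry_free H S a w : comm_graph H ->
  H \subset entry_free S -> a \in S -> a \in root_set H -> w \notin S ->
  rooted_avoiding setT H.
Proof.
move=> cH HS aS aR wS; split=> //; first by apply/set0Pn; exists a.
apply: contraNneq wS => RT.
by apply: (subsetP (root_set_entry_free HS aS)); rewrite RT.
Qed.

(* Every graph between the meet and either side contains all edges out of [a]. *)
Lemma edge_linked_entry_free S1 S2 a w1 w2 :
  a \in S1 -> a \in S2 -> w1 \notin S1 -> w2 \notin S2 ->
  edge_linked (rooted_avoiding setT) (entry_free S1) (entry_free S2).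
Proof.
move=> a1 a2 w1S w2S.
pose M := entry_free S1 :&: entry_free S2.
have okH S w H : a \in S -> w \notin S ->
    M \subset H -> H \subset entry_free S -> rooted_avoiding setT H.
  move=> aS wS sMH HS; apply: (rooted_avoiding_setT_entry_free _ HS aS _ wS).
    by move=> p; apply: (subsetP sMH); rewrite inE !entry_free_loop.
  rewrite inE; apply/forallP => q; apply: connect1; apply: (subsetP sMH).
  by rewrite !inE /= a1 a2 !implybT.
apply: (@rst_trans _ _ _ M _ (rst_sym _ _ _ _ _)); apply: edge_linked_interval.
- exact: subsetIl.
- by move=> H; apply: okH a1 w1S.
- exact: subsetIr.
- by move=> H; apply: okH a2 w2S.
Qed.

Lemma edge_linked_entry_free1 G c : 2 < #|Pi| ->
  rooted_avoiding setT G ->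
  edge_linked (rooted_avoiding setT) G (entry_free [set c]).
Proof.
move=> n2 [cG /set0Pn[a aR] RT].
have /properP[_ [w _ wR]] : root_set G \proper setT by rewrite properT.
have /properP[_ [w2 _ w2ac]] : [set a; c] \proper setT.
  by rewrite properEcard subsetT cardsT cards2 (leq_ltn_trans _ n2) //; case: (a != c).
have w2c : w2 \notin [set c] by move: w2ac; rewrite !inE negb_or => /andP[].
have aac : a \in [set a; c] by rewrite !inE eqxx.
have cac : c \in [set a; c] by rewrite !inE eqxx orbT.
apply: rst_trans (edge_linked_interval (subset_entry_free_root_set G) _) _.
  move=> H sGH HS; apply: (rooted_avoiding_setT_entry_free _ HS aR _ wR).
    by move=> p; apply: (subsetP sGH).
  exact: subsetP (root_set_subset sGH) a aR.
apply: rst_trans (edge_linked_entry_free aR aac wR w2ac) _.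
exact: edge_linked_entry_free cac (set11 c) w2ac w2c.
Qed.

End AvoidingRoot.

Theorem lemma2 (Pi : finType) (G G' : {set Pi * Pi}) (R R' R'' : {set Pi}) :
  2 < #|Pi| ->
  comm_graph G -> rooted_with G R ->
  comm_graph G' -> rooted_with G' R' ->
  R'' != set0 -> R'' != R -> R'' != R' ->
  exists (k : nat) (Gs : nat -> {set Pi * Pi}),
    [/\ 0 < k, Gs 0 = G, Gs k.-1 = G',
        (forall i, i < k ->
           comm_graph (Gs i) /\ exists Ri, rooted_with (Gs i) Ri /\ Ri != R'')
      & (forall i, i.+1 < k -> differ_one_edge (Gs i) (Gs i.+1))].
Proof.
move=> n2 cG rG cG' rG' _ nR nR'.
have [eR R0] := rooted_withE rG; have [eR' R0'] := rooted_withE rG'.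
subst R R'.
have okG : rooted_avoiding R'' G by split; rewrite // eq_sym.
have okG' : rooted_avoiding R'' G' by split; rewrite // eq_sym.
have link : edge_linked (rooted_avoiding R'') G G'.
  have [eT|nT] := eqVneq R'' setT.
    subst R''.
    have [c _] := set0Pn _ R0.
    apply: rst_trans (edge_linked_entry_free1 c n2 okG) _.
    exact: rst_sym (edge_linked_entry_free1 c n2 okG').
  apply: rst_trans (edge_linked_setT nT okG) _.
  exact: rst_sym (edge_linked_setT nT okG').
have [k [Gs [k0 G0 Gk okGs dGs]]] := edge_linked_seq link okG.
exists k, Gs; split=> // i /okGs [ci Ri0 RiR]; split=> //.
by exists (root_set (Gs i)); split=> //; exact: rooted_with_root_set.
Qed.
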